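(* A $b$-complete idempotent semimodule $V$ over a $b$-complete idempotent semiring $K$ is isomorphic to a functional $b$-semimodule (on some nonempty set) for which the kernel theorem holds if and only if the identity mapping on $V$ is a $b$-nuclear operator, i.e., $V$ is a $b$-nuclear semimodule.
   Context: Idempotent semigroup: commutative, associative, idempotent $\oplus$ with order $x\preceq y$ iff $x\oplus y=y$; $b$-complete: every bounded above subset (incl. $\emptyset$) has a least upper bound. A homomorphism of $b$-complete semigroups is a $b$-homomorphism if it preserves least upper bounds of bounded above subsets. Idempotent semiring: idempotent commutative associative $\oplus$, associative $\odot$ bi-distributive, unit $\mathbf 1$, zero $\mathbf 0$; $b$-complete if $b$-complete and $k\odot(\oplus X)=\oplus(k\odot X)$, $(\oplus X)\odot k=\oplus(X\odot k)$ for bounded $X$. Idempotent semimodule over $K$: idempotent semigroup with associative bi-distributive $K$-action, $\mathbf 1\odot x=x$, $\mathbf 0\odot x=\mathbf 0$; $b$-complete if $b$-complete as semigroup and $(\oplus Q)\odot x=\oplus(Q\odot x)$, $k\odot(\oplus X)=\oplus(k\odot X)$ for bounded $Q,X$. Linear: preserves $\oplus$ and scalar multiplication; $b$-linear: moreover a $b$-homomorphism; a $b$-linear functional is a $b$-linear map into $K$. $K(X)$: all maps $X\to K$, pointwise operations; a functional $b$-semimodule on $X$ is a subset of $K(X)$ closed under pointwise $\oplus$ and scalar multiplication, which is a $b$-complete semimodule and whose embedding into $K(X)$ is a $b$-homomorphism. A mapping $A\colon V\to W$ is integral if there is $k\colon X\to W$ with $\{f(x)\odot k(x)\mid x\in X\}$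 bounded for all $f$ and $Af=\sup_{x\in X}(f(x)\odot k(x))$; the kernel theorem holds for a functional $b$-semimodule if every $b$-linear mapping from it to any $b$-complete semimodule over $K$ is integral. A one-dimensional mapping is $v\mapsto\phi(v)\odot w$ with $\phi$ a $b$-linear functional; a $b$-nuclear mapping is the pointwise supremum of a bounded above set of one-dimensional mappings. $V$ is $b$-nuclear if every $b$-linear map from $V$ to any $b$-complete semimodule over $K$ is $b$-nuclear. *)

Set Implicit Arguments.
Unset Strict Implicit.

Definition ple {A : Type} (add : A -> A -> A) (x y : A) : Prop := add x y = y.

Definition upper_bound {A : Type} (add : A -> A -> A) (S : A -> Prop) (u : A) : Prop :=
  forall x, S x -> ple add x u.

Definition bounded_above {A : Type} (add : A -> A -> A) (S : A -> Prop) : Prop :=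
  exists u, upper_bound add S u.

Definition is_lub {A : Type} (add : A -> A -> A) (S : A -> Prop) (u : A) : Prop :=
  upper_bound add S u /\ forall v, upper_bound add S v -> ple add u v.

(* b-complete: every bounded above subset (including the empty one) has a lub *)
Definition b_complete_sg {A : Type} (add : A -> A -> A) : Prop :=
  forall S : A -> Prop, bounded_above add S -> exists u, is_lub add S u.

Definition image {A B : Type} (f : A -> B) (S : A -> Prop) : B -> Prop :=
  fun y => exists x, S x /\ y = f x.

Definition b_hom {A B : Type} (addA : A -> A -> A) (addB : B -> B -> B) (f : A -> B) : Prop :=
  forall (S : A -> Prop) (u : A), bounded_above addA S -> is_lub addA S u ->
    is_lub addB (image f S) (f u).

Record BSemiring : Type := {
  sr_car :> Type;
  sr_add : sr_car -> sr_car -> sr_car;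
  sr_mul : sr_car -> sr_car -> sr_car;
  sr_zero : sr_car;
  sr_one : sr_car;
  sr_add_comm : forall x y, sr_add x y = sr_add y x;
  sr_add_assoc : forall x y z, sr_add x (sr_add y z) = sr_add (sr_add x y) z;
  sr_add_idem : forall x, sr_add x x = x;
  sr_add_zero : forall x, sr_add sr_zero x = x;
  sr_mul_assoc : forall x y z, sr_mul x (sr_mul y z) = sr_mul (sr_mul x y) z;
  sr_mul_one_l : forall x, sr_mul sr_one x = x;
  sr_mul_one_r : forall x, sr_mul x sr_one = x;
  sr_mul_zero_l : forall x, sr_mul sr_zero x = sr_zero;
  sr_mul_zero_r : forall x, sr_mul x sr_zero = sr_zero;
  sr_distr_l : forall x y z, sr_mul x (sr_add y z) = sr_add (sr_mul x y) (sr_mul x z);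
  sr_distr_r : forall x y z, sr_mul (sr_add x y) z = sr_add (sr_mul x z) (sr_mul y z);
  sr_bcomplete : b_complete_sg sr_add;
  sr_mul_lub_l : forall k (S : sr_car -> Prop) u,
      bounded_above sr_add S -> is_lub sr_add S u ->
      is_lub sr_add (image (sr_mul k) S) (sr_mul k u);
  sr_mul_lub_r : forall k (S : sr_car -> Prop) u,
      bounded_above sr_add S -> is_lub sr_add S u ->
      is_lub sr_add (image (fun x => sr_mul x k) S) (sr_mul u k)
}.

Record BSemimodule (K : BSemiring) : Type := {
  sm_car :> Type;
  sm_add : sm_car -> sm_car -> sm_car;
  sm_zero : sm_car;
  sm_smul : K -> sm_car -> sm_car;
  sm_add_comm : forall x y, sm_add x y = sm_add y x;
  sm_add_assoc : forall x y z, sm_add x (sm_add y z) = sm_add (sm_add x y) z;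
  sm_add_idem : forall x, sm_add x x = x;
  sm_add_zero : forall x, sm_add sm_zero x = x;
  sm_smul_assoc : forall (a b : K) x, sm_smul (sr_mul (b:=K) a b) x = sm_smul a (sm_smul b x);
  sm_smul_distr_l : forall (a : K) x y, sm_smul a (sm_add x y) = sm_add (sm_smul a x) (sm_smul a y);
  sm_smul_distr_r : forall (a b : K) x, sm_smul (sr_add (b:=K) a b) x = sm_add (sm_smul a x) (sm_smul b x);
  sm_smul_one : forall x, sm_smul (sr_one K) x = x;
  sm_smul_zero : forall x, sm_smul (sr_zero K) x = sm_zero;
  sm_bcomplete : b_complete_sg sm_add;
  sm_lub_scal : forall (Q : K -> Prop) (q : K) x,
      bounded_above (sr_add (b:=K)) Q -> is_lub (sr_add (b:=K)) Q q ->
      is_lub sm_add (image (fun a => sm_smul a x) Q) (sm_smul q x);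
  sm_lub_vec : forall (k : K) (S : sm_car -> Prop) u,
      bounded_above sm_add S -> is_lub sm_add S u ->
      is_lub sm_add (image (sm_smul k) S) (sm_smul k u)
}.

Arguments sr_add : clear implicits.
Arguments sr_mul : clear implicits.
Arguments sm_add {K} b0 _ _.
Arguments sm_zero {K} b0.
Arguments sm_smul {K} b0 _ _.

Definition linear_map {K : BSemiring} {V W : BSemimodule K} (A : V -> W) : Prop :=
  (forall x y, A (sm_add V x y) = sm_add W (A x) (A y)) /\
  (forall (k : K) x, A (sm_smul V k x) = sm_smul W k (A x)).

Definition b_linear {K : BSemiring} {V W : BSemimodule K} (A : V -> W) : Prop :=
  linear_map A /\ b_hom (sm_add V) (sm_add W) A.

Definition b_linear_functional {K : BSemiring} {V : BSemimodule K} (phi : V -> K) : Prop :=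
  (forall x y, phi (sm_add V x y) = sr_add K (phi x) (phi y)) /\
  (forall (k : K) x, phi (sm_smul V k x) = sr_mul K k (phi x)) /\
  b_hom (sm_add V) (sr_add K) phi.

Definition one_dimensional {K : BSemiring} {V W : BSemimodule K} (f : V -> W) : Prop :=
  exists (phi : V -> K) (w : W), b_linear_functional phi /\ forall v, f v = sm_smul W (phi v) w.

Definition b_nuclear_map {K : BSemiring} {V W : BSemimodule K} (A : V -> W) : Prop :=
  exists S : (V -> W) -> Prop,
    (forall f, S f -> one_dimensional f) /\
    bounded_above (fun f g : V -> W => fun v => sm_add W (f v) (g v)) S /\
    (forall v, is_lub (sm_add W) (fun y => exists f, S f /\ y = f v) (A v)).

Definition b_nuclear_semimodule {K : BSemiring} (V : BSemimodule K) : Prop :=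
  forall (W : BSemimodule K) (A : V -> W), b_linear A -> b_nuclear_map A.

Definition fadd {K : BSemiring} {X : Type} (f g : X -> K) : X -> K :=
  fun x => sr_add K (f x) (g x).
Definition fsmul {K : BSemiring} {X : Type} (k : K) (f : X -> K) : X -> K :=
  fun x => sr_mul K k (f x).

Definition subset_of {A : Type} (S F : A -> Prop) : Prop := forall f, S f -> F f.

(* order notions inside the subset F (order induced from K(X)) *)
Definition bounded_in {K : BSemiring} {X : Type} (F S : (X -> K) -> Prop) : Prop :=
  exists u, F u /\ upper_bound fadd S u.
Definition lub_in {K : BSemiring} {X : Type} (F S : (X -> K) -> Prop) (u : X -> K) : Prop :=
  F u /\ upper_bound fadd S u /\ (forall v, F v -> upper_bound fadd S v -> ple fadd u v).

Definition functional_b_semimodule {K : BSemiring} {X : Type} (F : (X -> K) -> Prop) : Prop :=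
  (forall f g, F f -> F g -> F (fadd f g)) /\
  (forall (k : K) f, F f -> F (fsmul k f)) /\
  (forall S, subset_of S F -> bounded_in F S -> exists u, lub_in F S u) /\
  (forall (Q : K -> Prop) (q : K) f, F f ->
      bounded_above (sr_add K) Q -> is_lub (sr_add K) Q q ->
      lub_in F (image (fun a => fsmul a f) Q) (fsmul q f)) /\
  (forall (k : K) S u, subset_of S F -> bounded_in F S -> lub_in F S u ->
      lub_in F (image (fsmul k) S) (fsmul k u)) /\
  (* the embedding F -> K(X) is a b-homomorphism *)
  (forall S u, subset_of S F -> bounded_in F S -> lub_in F S u -> is_lub fadd S u).

Definition b_linear_on {K : BSemiring} {X : Type} {W : BSemimodule K}
    (F : (X -> K) -> Prop) (A : (X -> K) -> W) : Prop :=
  (forall f g, F f -> F g -> A (fadd f g) = sm_add W (A f) (A g)) /\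
  (forall (k : K) f, F f -> A (fsmul k f) = sm_smul W k (A f)) /\
  (forall S u, subset_of S F -> bounded_in F S -> lub_in F S u ->
      is_lub (sm_add W) (image A S) (A u)).

Definition integral_on {K : BSemiring} {X : Type} {W : BSemimodule K}
    (F : (X -> K) -> Prop) (A : (X -> K) -> W) : Prop :=
  exists k : X -> W, forall f, F f ->
    bounded_above (sm_add W) (fun w => exists x, w = sm_smul W (f x) (k x)) /\
    is_lub (sm_add W) (fun w => exists x, w = sm_smul W (f x) (k x)) (A f).

Definition kernel_theorem_holds {K : BSemiring} {X : Type} (F : (X -> K) -> Prop) : Prop :=
  forall (W : BSemimodule K) (A : (X -> K) -> W), b_linear_on F A -> integral_on F A.

Definition iso_onto {K : BSemiring} {X : Type} {V : BSemimodule K}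
    (F : (X -> K) -> Prop) (iota : V -> X -> K) : Prop :=
  (forall v, F (iota v)) /\
  (forall f, F f -> exists v, iota v = f) /\
  (forall v1 v2, iota v1 = iota v2 -> v1 = v2) /\
  (forall x y, iota (sm_add V x y) = fadd (iota x) (iota y)) /\
  (forall (k : K) x, iota (sm_smul V k x) = fsmul k (iota x)).

(* A nuclear decomposition of the identity, [v = sup_x phi_x(v) ⊙ w_x], and a functional
   realisation with the kernel theorem are two readings of the same object, a
   reproducing family of b-linear functionals [phi_x] and vectors [w_x].  Given such a
   family, [v |-> (x |-> phi_x(v))] embeds V into K(X); the image is a functional
   b-semimodule because the [phi_x] are b-linear, and every b-linear [A] on it is
   integral with kernel [x |-> A(y |-> phi_y(w_x))], obtained by applying [A] to the
   reproducing supremum.  Conversely, the kernel theorem applied to the inverse of a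
   functional realisation [V ≅ F ⊆ K(X)] yields such a family, with [phi_x] the
   evaluation at [x].  One may take for X the set of all one-dimensional maps lying
   below the identity.  Finally, composing a nuclear decomposition of the identity with
   a b-linear [A] decomposes [A]. *)

From Stdlib Require Import ClassicalEpsilon FunctionalExtensionality PropExtensionality.

Lemma pred_ext {A : Type} (S S' : A -> Prop) : (forall x, S x <-> S' x) -> S = S'.
Proof.
  intro H; apply functional_extensionality; intro x.
  apply propositional_extensionality, H.
Qed.

Definition range {A B : Type} (f : A -> B) : B -> Prop := fun b => exists a, f a = b.

Lemma ple_antisym {A : Type} (add : A -> A -> A)
    (add_comm : forall x y, add x y = add y x) x y :
  ple add x y -> ple add y x -> x = y.
Proof. unfold ple; intros Hxy Hyx. rewrite <- Hyx at 1. rewrite add_comm. exact Hxy. Qed.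

Lemma is_lub_unique {A : Type} (add : A -> A -> A)
    (add_comm : forall x y, add x y = add y x) S u u' :
  is_lub add S u -> is_lub add S u' -> u = u'.
Proof. intros [Hu Hleu] [Hu' Hleu']. apply (ple_antisym add add_comm); auto. Qed.

Lemma is_lub_bounded_above {A : Type} {add : A -> A -> A} {S u} :
  is_lub add S u -> bounded_above add S.
Proof. intros [Hu _]; exists u; exact Hu. Qed.

Lemma ple_additive {A B : Type} (addA : A -> A -> A) (addB : B -> B -> B) (f : A -> B)
    (f_add : forall x y, f (addA x y) = addB (f x) (f y)) x y :
  ple addA x y -> ple addB (f x) (f y).
Proof. unfold ple; intro H; rewrite <- f_add, H; reflexivity. Qed.

Lemma ple_pointwise {A B : Type} (add : B -> B -> B) (f g : A -> B) :
  ple (fun f g : A -> B => fun a => add (f a) (g a)) f g <-> forall a, ple add (f a) (g a).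
Proof.
  unfold ple; split; intro H.
  - intro a; exact (equal_f H a).
  - apply functional_extensionality; exact H.
Qed.

(* Testing an upper bound that agrees with [u] off [a] isolates the coordinate [a];
   this needs decidable equality on [A], hence classical logic. *)
Lemma is_lub_pointwise_eval {A B : Type} {add : B -> B -> B} {S : (A -> B) -> Prop} {u} a :
  is_lub (fun f g : A -> B => fun a => add (f a) (g a)) S u ->
  is_lub add (fun y => exists s, S s /\ y = s a) (u a).
Proof.
  intros [Hub Hleast]. split.
  - intros y [s [Ss ->]]. exact (proj1 (ple_pointwise _ _ _) (Hub s Ss) a).
  - intros c Hc.
    set (g := fun b => if excluded_middle_informative (b = a) then c else u b).
    assert (Hug : ple (fun f g : A -> B => fun a => add (f a) (g a)) u g).
    { apply Hleast. intros s Ss. apply ple_pointwise; intro b; unfold g.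
      destruct (excluded_middle_informative (b = a)) as [->|_].
      - apply Hc; exists s; auto.
      - exact (proj1 (ple_pointwise _ _ _) (Hub s Ss) b). }
    pose proof (proj1 (ple_pointwise _ _ _) Hug a) as Ha. unfold g in Ha.
    destruct (excluded_middle_informative (a = a)); [exact Ha | congruence].
Qed.

Section Embedding.
Context {K : BSemiring} {V : BSemimodule K} {X : Type}.
Context {iota : V -> X -> K}.
Hypothesis iota_add : forall x y, iota (sm_add V x y) = fadd (iota x) (iota y).
Hypothesis iota_inj : forall v1 v2, iota v1 = iota v2 -> v1 = v2.

Lemma ple_iota a b : ple fadd (iota a) (iota b) <-> ple (sm_add V) a b.
Proof.
  unfold ple; rewrite <- iota_add; split; intro H.
  - apply iota_inj; exact H.
  - rewrite H; reflexivity.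
Qed.

Lemma lub_in_range_image {T u} :
  is_lub (sm_add V) T u -> lub_in (range iota) (image iota T) (iota u).
Proof.
  intros [Hub Hleast]. split; [exists u; reflexivity | split].
  - intros y [t [Tt ->]]. apply ple_iota; auto.
  - intros g [c <-] Hc. apply ple_iota, Hleast. intros t Tt.
    apply ple_iota, Hc. exists t; auto.
Qed.

Lemma bounded_in_range_image {T} :
  bounded_above (sm_add V) T -> bounded_in (range iota) (image iota T).
Proof.
  intros [b Hb]. exists (iota b). split; [exists b; reflexivity|].
  intros y [t [Tt ->]]. apply ple_iota; auto.
Qed.

Lemma is_lub_preimage {S u} :
  subset_of S (range iota) -> lub_in (range iota) S (iota u) ->
  is_lub (sm_add V) (fun t => S (iota t)) u.
Proof.
  intros HS [_ [Hub Hleast]]. split.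
  - intros t St. apply ple_iota, Hub; exact St.
  - intros c Hc. apply ple_iota, Hleast; [exists c; reflexivity|].
    intros s Ss. destruct (HS s Ss) as [t <-]. apply ple_iota, Hc; exact Ss.
Qed.

Lemma bounded_above_preimage {S} :
  bounded_in (range iota) S -> bounded_above (sm_add V) (fun t => S (iota t)).
Proof.
  intros [b [[c <-] Hb]]. exists c. intros t St. apply ple_iota, Hb; exact St.
Qed.

Lemma image_preimage {S} : subset_of S (range iota) -> image iota (fun t => S (iota t)) = S.
Proof.
  intro HS. apply pred_ext; intro y; split.
  - intros [t [St ->]]; exact St.
  - intro Sy. destruct (HS y Sy) as [t <-]. exists t; auto.
Qed.

End Embedding.

Lemma image_image {A B C : Type} (f : A -> B) (g : B -> C) S :
  image g (image f S) = image (fun a => g (f a)) S.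
Proof.
  apply pred_ext; intro c; split.
  - intros [b [[a [Sa ->]] ->]]. exists a; auto.
  - intros [a [Sa ->]]. exists (f a); split; [exists a|]; auto.
Qed.

Definition coords {K : BSemiring} {V X : Type} (phi : X -> V -> K) (v : V) : X -> K :=
  fun x => phi x v.

Definition reproducing_family {K : BSemiring} {V : BSemimodule K} {X : Type}
    (phi : X -> V -> K) (w : X -> V) : Prop :=
  (forall x, b_linear_functional (phi x)) /\
  forall v, is_lub (sm_add V) (fun y => exists x, y = sm_smul V (phi x v) (w x)) v.

Section ReproducingFamily.
Context {K : BSemiring} {V : BSemimodule K} {X : Type}.
Context {phi : X -> V -> K} {w : X -> V}.
Hypothesis phi_blf : forall x, b_linear_functional (phi x).
Hypothesis reproduce :
  forall v, is_lub (sm_add V) (fun y => exists x, y = sm_smul V (phi x v) (w x)) v.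

Lemma coords_add a b : coords phi (sm_add V a b) = fadd (coords phi a) (coords phi b).
Proof. apply functional_extensionality; intro x; apply (phi_blf x). Qed.

Lemma coords_smul (k : K) a : coords phi (sm_smul V k a) = fsmul k (coords phi a).
Proof. apply functional_extensionality; intro x; apply (phi_blf x). Qed.

Lemma coords_inj a b : coords phi a = coords phi b -> a = b.
Proof.
  intro Hab.
  assert (Hx : forall x, phi x a = phi x b) by (intro x; exact (equal_f Hab x)).
  apply (is_lub_unique _ (@sm_add_comm K V) _ _ _ (reproduce a)).
  replace (fun y => exists x, y = sm_smul V (phi x a) (w x))
    with (fun y => exists x, y = sm_smul V (phi x b) (w x)); [exact (reproduce b)|].
  apply pred_ext; intro y; split; intros [x ->]; exists x; rewrite Hx; reflexivity.
Qed.

Lemma range_coords_is_lub S u :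
  subset_of S (range (coords phi)) -> bounded_in (range (coords phi)) S ->
  lub_in (range (coords phi)) S u -> is_lub fadd S u.
Proof.
  intros HS Hb Hu. destruct (proj1 Hu) as [u0 Eu]; subst u.
  split; [exact (proj1 (proj2 Hu))|]. intros g Hg. apply ple_pointwise; intro x.
  pose proof (is_lub_preimage coords_add coords_inj HS Hu) as Hlub.
  destruct (proj2 (proj2 (phi_blf x)) _ u0
              (bounded_above_preimage coords_add coords_inj Hb) Hlub) as [_ Hphi].
  apply Hphi. intros y [t [St ->]].
  exact (proj1 (ple_pointwise _ _ _) (Hg _ St) x).
Qed.

Lemma functional_range_coords : functional_b_semimodule (range (coords phi)).
Proof.
  split; [|split; [|split; [|split; [|split]]]].
  - intros f g [a <-] [b <-]. exists (sm_add V a b); apply coords_add.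
  - intros k f [a <-]. exists (sm_smul V k a); apply coords_smul.
  - intros S HS Hb.
    destruct (sm_bcomplete (bounded_above_preimage coords_add coords_inj Hb)) as [u Hu].
    exists (coords phi u). rewrite <- (image_preimage HS).
    exact (lub_in_range_image coords_add coords_inj Hu).
  - intros Q q f [v <-] HQ Hq.
    assert (E : (fun a => fsmul a (coords phi v)) = (fun a => coords phi (sm_smul V a v))).
    { apply functional_extensionality; intro a; symmetry; apply coords_smul. }
    rewrite E, <- image_image, <- coords_smul.
    exact (lub_in_range_image coords_add coords_inj (sm_lub_scal v HQ Hq)).
  - intros k S u HS Hb Hu. destruct (proj1 Hu) as [u0 Eu]; subst u.
    pose proof (is_lub_preimage coords_add coords_inj HS Hu) as Hlub.
    pose proof (sm_lub_vec k (bounded_above_preimage coords_add coords_inj Hb) Hlub) as Hk.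
    rewrite <- (image_preimage HS), image_image, <- coords_smul.
    replace (image (fun t => fsmul k (coords phi t)) (fun t => S (coords phi t)))
      with (image (coords phi) (image (sm_smul V k) (fun t => S (coords phi t)))).
    + exact (lub_in_range_image coords_add coords_inj Hk).
    + rewrite image_image. f_equal. apply functional_extensionality; intro t.
      apply coords_smul.
  - exact range_coords_is_lub.
Qed.

Lemma kernel_theorem_range_coords : kernel_theorem_holds (range (coords phi)).
Proof.
  intros W A [_ [A_smul A_lub]].
  exists (fun x => A (coords phi (w x))). intros f [v <-].
  set (L := fun y => exists x, y = sm_smul V (phi x v) (w x)).
  assert (HL : image A (image (coords phi) L)
               = fun y => exists x, y = sm_smul W (coords phi v x) (A (coords phi (w x)))).
  { rewrite image_image. apply pred_ext; intro y; split.
    - intros [t [[x ->] ->]]. exists x.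
      rewrite coords_smul, A_smul; [reflexivity | exists (w x); reflexivity].
    - intros [x ->]. exists (sm_smul V (phi x v) (w x)). split; [exists x; reflexivity|].
      rewrite coords_smul, A_smul; [reflexivity | exists (w x); reflexivity]. }
  assert (HS : subset_of (image (coords phi) L) (range (coords phi)))
    by (intros f [t [_ ->]]; exists t; reflexivity).
  pose proof (A_lub _ _ HS
      (bounded_in_range_image coords_add coords_inj (is_lub_bounded_above (reproduce v)))
      (lub_in_range_image coords_add coords_inj (reproduce v))) as HA.
  rewrite HL in HA. split; [exact (is_lub_bounded_above HA) | exact HA].
Qed.

Lemma iso_onto_range_coords : iso_onto (range (coords phi)) (coords phi).
Proof.
  split; [intro v; exists v; reflexivity|].
  split; [intros f Hf; exact Hf|].
  split; [exact coords_inj|].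
  split; [exact coords_add | exact coords_smul].
Qed.

Lemma reproducing_b_nuclear_id : b_nuclear_map (fun v : V => v).
Proof.
  exists (fun f => exists x, f = fun v => sm_smul V (phi x v) (w x)). split; [|split].
  - intros f [x ->]. exists (phi x), (w x); auto.
  - exists (fun v => v). intros f [x ->]. apply ple_pointwise; intro v.
    apply (proj1 (reproduce v)). exists x; reflexivity.
  - intro v.
    replace (fun y => exists f, (exists x, f = fun v => sm_smul V (phi x v) (w x)) /\ y = f v)
      with (fun y => exists x, y = sm_smul V (phi x v) (w x)); [exact (reproduce v)|].
    apply pred_ext; intro y; split.
    + intros [x ->]. eexists; split; [exists x; reflexivity | reflexivity].
    + intros [f [[x ->] ->]]. exists x; reflexivity.
Qed.

End ReproducingFamily.

Lemma b_nuclear_map_comp {K : BSemiring} {U V W : BSemimodule K} {B : U -> V} {A : V -> W} :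
  b_nuclear_map B -> b_linear A -> b_nuclear_map (fun u => A (B u)).
Proof.
  intros [S [HS [_ HB]]] [[A_add A_smul] A_lub].
  set (S' := fun g => exists f phi w, S f /\ b_linear_functional phi /\
               (forall u, f u = sm_smul V (phi u) w) /\ g = fun u => sm_smul W (phi u) (A w)).
  assert (Hvalues : forall u, (fun y => exists g, S' g /\ y = g u)
                              = image A (fun y => exists f, S f /\ y = f u)).
  { intro u. apply pred_ext; intro y; split.
    - intros [g [(f & phi & w & Sf & _ & Hf & ->) ->]].
      exists (f u). split; [exists f; auto | rewrite Hf, A_smul; reflexivity].
    - intros [x [[f [Sf ->]] ->]]. destruct (HS f Sf) as (phi & w & Hphi & Hf).
      exists (fun u => sm_smul W (phi u) (A w)). split.
      + exists f, phi, w; auto.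
      + rewrite Hf, A_smul; reflexivity. }
  exists S'. split; [|split].
  - intros g (f & phi & w & _ & Hphi & _ & ->). exists phi, (A w); auto.
  - exists (fun u => A (B u)). intros g (f & phi & w & Sf & _ & Hf & ->).
    apply ple_pointwise; intro u. rewrite <- A_smul, <- Hf.
    apply (ple_additive _ _ A A_add), (proj1 (HB u)). exists f; auto.
  - intro u. rewrite Hvalues. exact (A_lub _ _ (is_lub_bounded_above (HB u)) (HB u)).
Qed.

Lemma id_b_linear {K : BSemiring} (V : BSemimodule K) : b_linear (fun v : V => v).
Proof.
  split; [split; reflexivity|].
  intros S u _ Hu. replace (image (fun v : V => v) S) with S; [exact Hu|].
  apply pred_ext; intro y; split.
  - intro Sy; exists y; auto.
  - intros [x [Sx ->]]; exact Sx.
Qed.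

Record rank_one_below_id {K : BSemiring} (V : BSemimodule K) : Type := {
  rb_form : V -> K;
  rb_vec : V;
  rb_form_blf : b_linear_functional rb_form;
  rb_below : forall v, ple (sm_add V) (sm_smul V (rb_form v) rb_vec) v }.

Lemma zero_b_linear_functional {K : BSemiring} (V : BSemimodule K) :
  b_linear_functional (fun _ : V => sr_zero K).
Proof.
  split; [|split].
  - intros; rewrite sr_add_zero; reflexivity.
  - intros; rewrite sr_mul_zero_r; reflexivity.
  - intros S u _ _. split.
    + intros y [x [_ ->]]. apply sr_add_zero.
    + intros v _. apply sr_add_zero.
Qed.

Lemma rank_one_below_id_inhabited {K : BSemiring} (V : BSemimodule K) :
  inhabited (rank_one_below_id V).
Proof.
  constructor. exists (fun _ => sr_zero K) (sm_zero V).
  - apply zero_b_linear_functional.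
  - intro v. rewrite sm_smul_zero. apply sm_add_zero.
Qed.

(* Every term of a nuclear decomposition of the identity lies below the identity,
   so the supremum over all such maps is again the identity. *)
Lemma b_nuclear_id_reproducing {K : BSemiring} (V : BSemimodule K) :
  b_nuclear_map (fun v : V => v) -> reproducing_family (@rb_form K V) (@rb_vec K V).
Proof.
  intros [S [HS [_ Hid]]]. split; [exact (@rb_form_blf K V)|].
  intro v. split.
  - intros y [r ->]. apply (@rb_below K V).
  - intros c Hc. apply (proj2 (Hid v)). intros y [f [Sf ->]].
    destruct (HS f Sf) as (phi & w & Hphi & Hf).
    assert (Hbelow : forall v, ple (sm_add V) (sm_smul V (phi v) w) v).
    { intro v'. rewrite <- Hf. apply (proj1 (Hid v')). exists f; auto. }
    rewrite Hf. apply Hc.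
    exists (@Build_rank_one_below_id K V phi w Hphi Hbelow). reflexivity.
Qed.

Section InverseOnRange.
Context {K : BSemiring} {V : BSemimodule K} {X : Type} {iota : V -> X -> K}.
Hypothesis iota_add : forall x y, iota (sm_add V x y) = fadd (iota x) (iota y).
Hypothesis iota_smul : forall (k : K) x, iota (sm_smul V k x) = fsmul k (iota x).
Hypothesis iota_inj : forall v1 v2, iota v1 = iota v2 -> v1 = v2.

(* Off the range of [iota] the value is arbitrary; [sm_zero V] only witnesses that [V]
   is inhabited. *)
Definition inverse_on_range (f : X -> K) : V :=
  epsilon (inhabits (sm_zero V)) (fun v => iota v = f).

Lemma inverse_on_range_iota v : inverse_on_range (iota v) = v.
Proof.
  apply iota_inj. unfold inverse_on_range.
  apply (epsilon_spec (inhabits (sm_zero V)) (fun u => iota u = iota v)). eauto.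
Qed.

Lemma inverse_on_range_b_linear_on : b_linear_on (range iota) inverse_on_range.
Proof.
  split; [|split].
  - intros f g [a <-] [b <-]. rewrite <- iota_add, !inverse_on_range_iota. reflexivity.
  - intros k f [a <-]. rewrite <- iota_smul, !inverse_on_range_iota. reflexivity.
  - intros S u HS _ Hu. destruct (proj1 Hu) as [u0 Eu]; subst u.
    rewrite inverse_on_range_iota.
    replace (image inverse_on_range S) with (fun t => S (iota t)).
    + exact (is_lub_preimage iota_add iota_inj HS Hu).
    + apply pred_ext; intro y; split.
      * intro Sy. exists (iota y). rewrite inverse_on_range_iota; auto.
      * intros [s [Ss ->]]. destruct (HS s Ss) as [t <-].
        rewrite inverse_on_range_iota; exact Ss.
Qed.

Hypothesis embedding_b_hom : forall S u, subset_of S (range iota) ->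
  bounded_in (range iota) S -> lub_in (range iota) S u -> is_lub fadd S u.

Lemma eval_b_linear_functional x : b_linear_functional (fun v => iota v x).
Proof.
  split; [|split].
  - intros a b. rewrite iota_add; reflexivity.
  - intros k a. rewrite iota_smul; reflexivity.
  - intros T u Hb Hu.
    assert (HS : subset_of (image iota T) (range iota))
      by (intros f [t [_ ->]]; exists t; reflexivity).
    pose proof (is_lub_pointwise_eval x (embedding_b_hom _ _ HS
                  (bounded_in_range_image iota_add iota_inj Hb)
                  (lub_in_range_image iota_add iota_inj Hu))) as Hx.
    replace (image (fun v => iota v x) T)
      with (fun y => exists s, image iota T s /\ y = s x); [exact Hx|].
    apply pred_ext; intro y; split.
    + intros [s [[t [Tt ->]] ->]]. exists t; auto.
    + intros [t [Tt ->]]. exists (iota t); split; [exists t|]; auto.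
Qed.

End InverseOnRange.

Lemma iso_onto_range {K : BSemiring} {V : BSemimodule K} {X : Type}
    {F : (X -> K) -> Prop} {iota : V -> X -> K} :
  iso_onto F iota -> F = range iota.
Proof.
  intros (Hin & Hsurj & _). apply pred_ext; intro f; split.
  - apply Hsurj.
  - intros [v <-]; apply Hin.
Qed.

Lemma reproducing_of_kernel_theorem {K : BSemiring} {V : BSemimodule K} {X : Type}
    {F : (X -> K) -> Prop} {iota : V -> X -> K} :
  functional_b_semimodule F -> kernel_theorem_holds F -> iso_onto F iota ->
  exists k : X -> V, reproducing_family (fun x v => iota v x) k.
Proof.
  intros HF Hker Hiso. rewrite (iso_onto_range Hiso) in HF, Hker.
  destruct HF as (_ & _ & _ & _ & _ & Hemb).
  destruct Hiso as (_ & _ & Hinj & Hadd & Hsmul).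
  destruct (Hker V _ (inverse_on_range_b_linear_on Hadd Hsmul Hinj)) as [k Hk].
  exists k. split.
  - exact (eval_b_linear_functional Hadd Hsmul Hinj Hemb).
  - intro v. destruct (Hk (iota v) (ex_intro _ v eq_refl)) as [_ Hv].
    rewrite (inverse_on_range_iota Hinj) in Hv. exact Hv.
Qed.

Theorem theorem7p32 (K : BSemiring) (V : BSemimodule K) :
  ((exists (X : Type) (F : (X -> K) -> Prop) (iota : V -> X -> K),
       inhabited X /\ functional_b_semimodule F /\ kernel_theorem_holds F /\ iso_onto F iota)
    <-> b_nuclear_map (fun v : V => v))
  /\ (b_nuclear_map (fun v : V => v) <-> b_nuclear_semimodule V).
Proof.
  split; split.
  - intros (X & F & iota & _ & HF & Hker & Hiso).
    destruct (reproducing_of_kernel_theorem HF Hker Hiso) as [k [Hphi Hrep]].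
    exact (reproducing_b_nuclear_id Hphi Hrep).
  - intro Hid. destruct (b_nuclear_id_reproducing V Hid) as [Hphi Hrep].
    exists (rank_one_below_id V), (range (coords (@rb_form K V))), (coords (@rb_form K V)).
    split; [exact (rank_one_below_id_inhabited V)|].
    split; [exact (functional_range_coords Hphi Hrep)|].
    split; [exact (kernel_theorem_range_coords Hphi Hrep)|].
    exact (iso_onto_range_coords Hphi Hrep).
  - intros Hid W A HA. exact (b_nuclear_map_comp Hid HA).
  - intro Hnuc. exact (Hnuc V _ (id_b_linear V)).
Qed.
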